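(* There exists a $\mathrm{CMSO}[2]$-formula $\mathrm{repr}_{A,B}(a,X)$, over the vocabulary consisting of the unary set predicate $\mathsf{SET}$ and two unary relations $A,B$, with a free first-order variable $a$ and a free monadic variable $X$, such that the following holds. Let $(U,\mathcal{S})$ be a laminar set system with laminar tree $T$, and let $(A,B)$ be a bi-colouring of $L(T)=U$ identifying a set $S$ of inner nodes of $T$. Then, in the structure with universe $U$, $\mathsf{SET}$ interpreted as $\mathcal{S}$ and the unary relations interpreted as $A$ and $B$, the formula $\mathrm{repr}_{A,B}(a,X)$ is satisfied exactly when $X$ is an inner node of $T$ that belongs to $S$ and $a$ is its $A$-representative.
   Context: $\mathrm{CMSO}[2]$ is monadic second-order logic (quantification over elements and over subsets of the universe) extended with a unary set predicate true of a set iff its size is even. A set system is a pair $(U,\mathcal{S})$ with $U$ finite, $\mathcal{S}$ a family of subsets of $U$ with $\emptyset\notin\mathcal{S}$, $U\in\mathcal{S}$, $\{a\}\in\mathcal{S}$ for all $a\in U$; it is laminar if no two members overlap (intersect with neither containing the other). Its laminar tree $T$ is the rooted tree whose nodes are the members of $\mathcal{S}$, root $U$, $X$ a child of $Y$ iff $X\subsetneq Y$ with no member strictly between; leaves are the singletons, identified with elements of $U$ (so a node is the set of leaves below it). Every node is its own ancestor. A bi-colouring is a pair $(A,B)$ of disjoint subsets of $L(T)$ of equal size. A pair $(\pi,\sigma)$ of injections from a set $S$ of inner nodes to $L(T)$ identifies $S$ if each $s\in S$ is the least common ancestor of $\pi(s)$ and $\sigma(s)$; a node $x$ is $s$-requested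 if it lies on the path from $\pi(s)$ to $\sigma(s)$; the pair has unique request if each node is $s$-requested for at most one $s$. $(A,B)$ identifies $S$ if some such pair with unique request has $\pi(S)=A$ and $\sigma(S)=B$; this pair is then unique, and $\pi(s)$ is called the $A$-representative of $s\in S$. *)

From mathcomp Require Import all_boot.
Set Implicit Arguments. Unset Strict Implicit. Unset Printing Implicit Defensive.

(* First-order variables and monadic (set) variables are both indexed by nat,
   in two separate name spaces. *)
Inductive cmso2 : Type :=
| FEq   : nat -> nat -> cmso2
| FIn   : nat -> nat -> cmso2
| FA    : nat -> cmso2
| FB    : nat -> cmso2
| FSet  : nat -> cmso2
| FEven : nat -> cmso2             (* |X_j| is even  (the CMSO[2] predicate) *)
| FNot  : cmso2 -> cmso2
| FAnd  : cmso2 -> cmso2 -> cmso2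
| FExF  : nat -> cmso2 -> cmso2
| FExS  : nat -> cmso2 -> cmso2.

Definition upd (X : Type) (g : nat -> X) (n : nat) (x : X) : nat -> X :=
  fun m => if m == n then x else g m.

Fixpoint sat (T : finType) (SS : {set {set T}}) (A B : {set T})
    (fa : nat -> T) (sa : nat -> {set T}) (f : cmso2) : Prop :=
  match f with
  | FEq i j => fa i = fa j
  | FIn i j => fa i \in sa j
  | FA i => fa i \in A
  | FB i => fa i \in B
  | FSet j => sa j \in SS
  | FEven j => ~~ odd #|sa j|
  | FNot g => ~ sat SS A B fa sa g
  | FAnd g h => sat SS A B fa sa g /\ sat SS A B fa sa h
  | FExF i g => exists t : T, sat SS A B (upd fa i t) sa g
  | FExS j g => exists X : {set T}, sat SS A B fa (upd sa j X) g
  end.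

Fixpoint fo_free (f : cmso2) (n : nat) : bool :=
  match f with
  | FEq i j => (n == i) || (n == j)
  | FIn i _ => n == i
  | FA i | FB i => n == i
  | FSet _ | FEven _ => false
  | FNot g => fo_free g n
  | FAnd g h => fo_free g n || fo_free h n
  | FExF i g => (n != i) && fo_free g n
  | FExS _ g => fo_free g n
  end.

Fixpoint so_free (f : cmso2) (n : nat) : bool :=
  match f with
  | FEq _ _ | FA _ | FB _ => false
  | FIn _ j => n == j
  | FSet j | FEven j => n == j
  | FNot g => so_free g n
  | FAnd g h => so_free g n || so_free h n
  | FExF _ g => so_free g n
  | FExS j g => (n != j) && so_free g n
  end.

Section Laminar.
Variable T : finType.
Implicit Types (SS Sn : {set {set T}}) (X Y Z : {set T}).

Definition overlap X Y : Prop :=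
  X :&: Y != set0 /\ ~~ (X \subset Y) /\ ~~ (Y \subset X).

Definition laminar_set_system SS : Prop :=
  [/\ set0 \notin SS, [set: T] \in SS, (forall a : T, [set a] \in SS) &
      forall X Y, X \in SS -> Y \in SS -> ~ overlap X Y].

Definition child SS X Y : bool :=
  [&& X \in SS, Y \in SS, X \proper Y &
      [forall Z, ~~ [&& Z \in SS, X \proper Z & Z \proper Y]]].

Definition is_ancestor SS Y X : bool := connect (child SS) X Y.

(* leaves are the singletons, identified with elements of U *)
Definition is_leaf SS X : bool := (X \in SS) && [exists a, X == [set a]].
Definition is_inner SS X : bool := (X \in SS) && ~~ is_leaf SS X.

Definition is_lca SS x (a b : T) : Prop :=
  [/\ x \in SS, is_ancestor SS x [set a], is_ancestor SS x [set b] &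
      forall y, y \in SS -> is_ancestor SS y [set a] -> is_ancestor SS y [set b] ->
        is_ancestor SS y x].

Definition on_path SS x (a b : T) : Prop :=
  x \in SS /\ exists l, [/\ is_lca SS l a b, is_ancestor SS l x &
                           is_ancestor SS x [set a] \/ is_ancestor SS x [set b]].

Definition bicolouring (A B : {set T}) : Prop :=
  [disjoint A & B] /\ #|A| = #|B|.

Definition identifying_pair SS Sn (pi sigma : {set T} -> T) : Prop :=
  [/\ {in Sn &, injective pi}, {in Sn &, injective sigma} &
      forall s, s \in Sn -> is_lca SS s (pi s) (sigma s)].

Definition requested SS (pi sigma : {set T} -> T) x s : Prop :=
  on_path SS x (pi s) (sigma s).

Definition unique_request SS Sn (pi sigma : {set T} -> T) : Prop :=
  forall x s1 s2, s1 \in Sn -> s2 \in Sn ->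
    requested SS pi sigma x s1 -> requested SS pi sigma x s2 -> s1 = s2.

Definition good_pair SS (A B : {set T}) Sn (pi sigma : {set T} -> T) : Prop :=
  [/\ identifying_pair SS Sn pi sigma, unique_request SS Sn pi sigma,
      pi @: Sn = A & sigma @: Sn = B].

Definition bicol_identifies SS (A B : {set T}) Sn : Prop :=
  exists pi sigma, good_pair SS A B Sn pi sigma.

(* a is the A-representative of s (the witnessing pair is unique) *)
Definition A_representative SS (A B : {set T}) Sn s (a : T) : Prop :=
  exists pi sigma, good_pair SS A B Sn pi sigma /\ pi s = a.

End Laminar.

From mathcomp Require Import all_boot.
From mathcomp Require Import zify.
From Stdlib Require Import Classical.
Set Implicit Arguments. Unset Strict Implicit. Unset Printing Implicit Defensive.

(* Since pi and sigma are injective with images A and B, the parity of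
   |(A ∪ B) ∩ Y| is the number of s ∈ S whose two endpoints are separated by Y.
   Such an s lies strictly above Y and requests Y, so by unique request there
   is at most one: Y has odd trace iff some s ∈ S separates it.  Hence every
   s ∈ S has even trace, while every node strictly below s containing pi s has
   odd trace; by laminarity these two parity conditions single out, among the
   nodes containing a ∈ A, exactly the s with pi s = a, and they are CMSO[2]
   expressible. *)

Section LaminarTree.
Variables (T : finType) (SS : {set {set T}}).

Lemma ancestor_sub Y X : is_ancestor SS Y X -> X \subset Y.
Proof.
case/connectP=> p; elim: p X => [|Z p IHp] X /= => [_ -> //|].
by case/andP=> /and4P[_ _ /proper_sub sXZ _] /IHp sZY /sZY; apply: subset_trans.
Qed.

Lemma sub_ancestor X Y : X \in SS -> Y \in SS -> X \subset Y -> is_ancestor SS Y X.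
Proof.
move=> SSX SSY; move: {2}(#|Y| - #|X|) (leqnn (#|Y| - #|X|)) => n.
elim: n X SSX => [|n IHn] X SSX gapXY sXY.
  have /eqP-> : X == Y by rewrite eqEcard sXY /=; lia.
  exact: connect0.
have [->|neXY] := eqVneq X Y; first exact: connect0.
have ltXY : X \proper Y by rewrite properEneq neXY.
pose between Z := [&& Z \in SS, X \proper Z & Z \subset Y].
have betweenY : between Y by rewrite /between SSY ltXY subxx.
have [Z /and3P[SSZ ltXZ sZY] minZ] := arg_minnP (fun Z : {set T} => #|Z|) betweenY.
apply: connect_trans (connect1 (_ : child SS X Z)) (IHn Z SSZ _ sZY).
  rewrite /child SSX SSZ ltXZ; apply/forallP=> W; apply/and3P=> [[SSW ltXW ltWZ]].
  have := minZ W; rewrite /between SSW ltXW (subset_trans (proper_sub ltWZ) sZY).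
  by have := proper_card ltWZ; lia.
by have := proper_card ltXZ; have := subset_leq_card sZY; lia.
Qed.

Hypothesis lamSS : laminar_set_system SS.

Lemma laminar_comparable X Y a : X \in SS -> Y \in SS -> a \in X -> a \in Y ->
  (X \subset Y) || (Y \subset X).
Proof.
case: lamSS => _ _ _ noOverlap SSX SSY aX aY.
apply/negPn/negP; rewrite negb_or => /andP[nsXY nsYX]; apply: (noOverlap X Y) => //.
by split=> //; apply/set0Pn; exists a; rewrite inE aX.
Qed.

Lemma is_lca_sub x a b : is_lca SS x a b ->
  [/\ a \in x, b \in x & forall y, y \in SS -> a \in y -> b \in y -> x \subset y].
Proof.
case: lamSS => _ _ SS1 _ [SSx /ancestor_sub ax /ancestor_sub bx lca_min].
rewrite -!sub1set; split=> // y SSy ya yb; apply/ancestor_sub/lca_min => //;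
  by apply: sub_ancestor; rewrite ?sub1set.
Qed.

Lemma on_path_below l a b Y : is_lca SS l a b -> Y \in SS -> Y \subset l ->
  (a \in Y) || (b \in Y) -> on_path SS Y a b.
Proof.
case: lamSS => _ _ SS1 _ lca_l SSY sYl abY; split=> //; exists l; split=> //.
  by apply: sub_ancestor => //; case: lca_l.
by case/orP: abY => [aY|bY]; [left|right]; apply: sub_ancestor; rewrite ?sub1set.
Qed.

End LaminarTree.

Lemma card_imset_setI (aT rT : finType) (f : aT -> rT) (D : {set aT}) (Y : {set rT}) :
  {in D &, injective f} -> #|f @: D :&: Y| = #|[set x in D | f x \in Y]|.
Proof.
move=> injf; have -> : f @: D :&: Y = f @: [set x in D | f x \in Y].
  apply/setP=> y; apply/setIP/imsetP=> [[/imsetP[x Dx ->] fxY]|[x]].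
    by exists x; rewrite ?inE ?Dx.
  by case/setIdP=> Dx fxY ->; rewrite imset_f.
by apply: card_in_imset; apply: sub_in2 injf => x /setIdP[].
Qed.

Lemma odd_cards_xor (T : finType) (D : {set T}) (p q : pred T) :
  odd (#|[set x in D | p x]| + #|[set x in D | q x]|) =
  odd #|[set x in D | p x != q x]|.
Proof.
set P := [set x in D | p x]; set Q := [set x in D | q x].
have -> : [set x in D | p x != q x] = (P :|: Q) :\: (P :&: Q).
  by apply/setP=> x; rewrite !inE; case: (x \in D) (p x) (q x) => [] [] [].
have sIU : P :&: Q \subset P :|: Q by rewrite subIset ?subsetUl.
rewrite -cardsUI -(cardsID (P :&: Q) (P :|: Q)) (setIidPr sIU).
by rewrite addnC addnA oddD addnn odd_double.
Qed.

Section GoodPair.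
Variables (T : finType) (SS : {set {set T}}) (A B : {set T}) (Sn : {set {set T}}).
Variables pi sigma : {set T} -> T.
Hypotheses (lamSS : laminar_set_system SS) (disjAB : [disjoint A & B]).
Hypothesis goodP : good_pair SS A B Sn pi sigma.

Definition separates (Y s : {set T}) := (pi s \in Y) != (sigma s \in Y).

Lemma Sn_lca s : s \in Sn -> is_lca SS s (pi s) (sigma s).
Proof. by case: goodP => [[_ _ lcaP] _ _ _] /lcaP. Qed.

Lemma Sn_SS s : s \in Sn -> s \in SS.
Proof. by case/Sn_lca. Qed.

Lemma requested_below s Y : s \in Sn -> Y \in SS -> Y \subset s ->
  (pi s \in Y) || (sigma s \in Y) -> requested SS pi sigma Y s.
Proof. by move/Sn_lca; apply: on_path_below. Qed.

Lemma separates_endpoint Y s : separates Y s -> (pi s \in Y) || (sigma s \in Y).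
Proof. by rewrite /separates; case: (pi s \in Y) (sigma s \in Y) => [] []. Qed.

Lemma separates_proper s Y : s \in Sn -> Y \in SS -> separates Y s -> Y \proper s.
Proof.
move=> Sn_s SSY sepYs; have [pi_s sigma_s _] := is_lca_sub lamSS (Sn_lca Sn_s).
have nsY : ~~ (s \subset Y).
  by apply: contra sepYs => /subsetP sY; rewrite /separates (sY _ pi_s) (sY _ sigma_s).
have [e eY es] : exists2 e, e \in Y & e \in s.
  by case/orP: (separates_endpoint sepYs) => eY; [exists (pi s) | exists (sigma s)].
have := laminar_comparable lamSS SSY (Sn_SS Sn_s) eY es.
by rewrite properE (negbTE nsY) orbF andbT.
Qed.

Lemma separates_requested s Y : s \in Sn -> Y \in SS -> separates Y s ->
  requested SS pi sigma Y s.
Proof.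
move=> Sn_s SSY sepYs; apply: requested_below => //; last exact: separates_endpoint.
exact/proper_sub/separates_proper.
Qed.

Lemma separated_uniq Y s1 s2 : Y \in SS -> s1 \in Sn -> s2 \in Sn ->
  separates Y s1 -> separates Y s2 -> s1 = s2.
Proof.
case: goodP => [_ uniq_req _ _] SSY Sn_s1 Sn_s2 sep1 sep2.
exact: (uniq_req Y _ _ Sn_s1 Sn_s2 (separates_requested Sn_s1 SSY sep1)
                                  (separates_requested Sn_s2 SSY sep2)).
Qed.

Lemma card_trace_endpoints Y :
  #|(A :|: B) :&: Y| = #|[set s in Sn | pi s \in Y]| + #|[set s in Sn | sigma s \in Y]|.
Proof.
have AB0 : A :&: Y :&: (B :&: Y) = set0.
  by rewrite setIACA setIid (disjoint_setI0 disjAB) set0I.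
rewrite setIUl cardsU AB0 cards0 subn0.
by case: goodP => [[inj_pi inj_sigma _] _ <- <-]; rewrite !card_imset_setI.
Qed.

Lemma odd_traceP Y : Y \in SS ->
  reflect (exists2 s, s \in Sn & separates Y s) (odd #|(A :|: B) :&: Y|).
Proof.
move=> SSY; rewrite card_trace_endpoints odd_cards_xor.
set S := [set s in Sn | _].
have le1S : #|S| <= 1.
  apply/card_le1_eqP => s1 s2 /setIdP[Sn_s1 sep1] /setIdP[Sn_s2 sep2].
  exact: separated_uniq SSY Sn_s2 Sn_s1 sep2 sep1.
have -> : odd #|S| = (0 < #|S|) by case: #|S| le1S => [|[]].
apply: (iffP card_gt0P) => [[s /setIdP[]]|[s Sn_s sepYs]]; first by exists s.
by exists s; rewrite inE Sn_s.
Qed.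

Lemma Sn_even_trace s : s \in Sn -> ~~ odd #|(A :|: B) :&: s|.
Proof.
move=> Sn_s; apply/negP => /(odd_traceP (Sn_SS Sn_s))[s' Sn_s' sep].
have [pi_s _ _] := is_lca_sub lamSS (Sn_lca Sn_s).
have req_self : requested SS pi sigma s s by apply: requested_below; rewrite ?Sn_SS ?pi_s.
have req' := separates_requested Sn_s' (Sn_SS Sn_s) sep.
case: goodP => [_ uniq_req _ _]; have eq_s := uniq_req s s' s Sn_s' Sn_s req' req_self.
by have := separates_proper Sn_s' (Sn_SS Sn_s) sep; rewrite eq_s properxx.
Qed.

Lemma odd_trace_below s Y : s \in Sn -> Y \in SS -> pi s \in Y -> Y \proper s ->
  odd #|(A :|: B) :&: Y|.
Proof.
move=> Sn_s SSY pi_sY ltYs; apply/(odd_traceP SSY); exists s => //.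
have [_ _ lca_min] := is_lca_sub lamSS (Sn_lca Sn_s).
rewrite /separates pi_sY; apply: contraL ltYs => sigma_sY.
by rewrite properE lca_min ?andbF.
Qed.

Lemma representative_parityP X a : X \in Sn /\ pi X = a <->
  [/\ X \in SS, a \in A, a \in X, ~~ odd #|(A :|: B) :&: X| &
      forall Y, Y \in SS -> a \in Y -> Y \proper X -> odd #|(A :|: B) :&: Y|].
Proof.
case: (goodP) => [_ _ piSn _]; split=> [[Sn_X <-]|[SSX aA aX evenX oddY]].
  have [pi_X _ _] := is_lca_sub lamSS (Sn_lca Sn_X).
  split; rewrite ?Sn_SS ?Sn_even_trace //; first by rewrite -piSn imset_f.
  by move=> Y SSY; apply: odd_trace_below.
have /imsetP[s Sn_s a_pi] : a \in pi @: Sn by rewrite piSn.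
have [pi_s _ _] := is_lca_sub lamSS (Sn_lca Sn_s).
have a_s : a \in s by rewrite a_pi.
have [eq_sX|ne_sX] := eqVneq s X; first by rewrite -eq_sX.
case/orP: (laminar_comparable lamSS (Sn_SS Sn_s) SSX a_s aX) => [sX|sXs].
  have ltsX : s \proper X by rewrite properEneq ne_sX.
  by have := Sn_even_trace Sn_s; rewrite oddY ?Sn_SS.
have ltXs : X \proper s by rewrite properEneq eq_sym ne_sX.
by have := odd_trace_below Sn_s SSX; rewrite -a_pi (negbTE evenX) => /(_ aX ltXs).
Qed.

End GoodPair.

Definition FOr p q := FNot (FAnd (FNot p) (FNot q)).
Definition FImp p q := FNot (FAnd p (FNot q)).
Definition FIff p q := FAnd (FImp p q) (FImp q p).
Definition FAllF i p := FNot (FExF i (FNot p)).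
Definition FAllS j p := FNot (FExS j (FNot p)).

(* In repr_AB, a is x_0 and X is X_0; x_1, X_1 and X_2 serve as bound variables. *)
Definition FSubset j k := FAllF 1 (FImp (FIn 1 j) (FIn 1 k)).
Definition FProper j k := FAnd (FSubset j k) (FNot (FSubset k j)).
Definition FInTrace j := FAnd (FIn 1 j) (FOr (FA 1) (FB 1)).
Definition FEvenTrace j := FExS 1 (FAnd (FAllF 1 (FIff (FIn 1 1) (FInTrace j))) (FEven 1)).

Definition FOddBelow :=
  FAllS 2 (FImp (FAnd (FSet 2) (FAnd (FIn 0 2) (FProper 2 0))) (FNot (FEvenTrace 2))).
Definition repr_AB :=
  FAnd (FSet 0) (FAnd (FA 0) (FAnd (FIn 0 0) (FAnd (FEvenTrace 0) FOddBelow))).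

Section Semantics.
Variables (T : finType) (SS : {set {set T}}) (A B : {set T}).
Implicit Types (fa : nat -> T) (sa : nat -> {set T}) (p q : cmso2).
Local Notation sat := (sat SS A B).

Lemma sat_or fa sa p q : sat fa sa (FOr p q) <-> sat fa sa p \/ sat fa sa q.
Proof.
split=> [nn | [sp | sq] [np nq]]; [apply: NNPP => /not_or_and; exact: nn | exact: np | exact: nq].
Qed.

Lemma sat_imp fa sa p q : sat fa sa (FImp p q) <-> (sat fa sa p -> sat fa sa q).
Proof. by split=> [nimp sp|imp [/imp]//]; apply: NNPP => nq; apply: nimp. Qed.

Lemma sat_iff fa sa p q : sat fa sa (FIff p q) <-> (sat fa sa p <-> sat fa sa q).
Proof. by have := sat_imp fa sa p q; have := sat_imp fa sa q p; rewrite /=; tauto. Qed.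

Lemma sat_allF fa sa i p : sat fa sa (FAllF i p) <-> forall t, sat (upd fa i t) sa p.
Proof.
split=> [nex t|all [t /(_ (all t))//]].
by apply: NNPP => np; apply: nex; exists t.
Qed.

Lemma sat_allS fa sa j p : sat fa sa (FAllS j p) <-> forall X, sat fa (upd sa j X) p.
Proof.
split=> [nex X|all [X /(_ (all X))//]].
by apply: NNPP => np; apply: nex; exists X.
Qed.

Lemma sat_subset fa sa j k : sat fa sa (FSubset j k) <-> sa j \subset sa k.
Proof.
rewrite sat_allF; split=> [sub|/subsetP sub t].
  by apply/subsetP => t; move/sat_imp: (sub t).
by apply/sat_imp/sub.
Qed.

Lemma sat_proper fa sa j k : sat fa sa (FProper j k) <-> sa j \proper sa k.
Proof.
rewrite properE; split=> [[/sat_subset-> nkj]|/andP[sjk nkj]].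
  by apply/negP => /sat_subset/nkj.
by split=> [|/sat_subset]; [apply/sat_subset | apply/negP].
Qed.

Lemma sat_in_trace fa sa j : sat fa sa (FInTrace j) <-> fa 1 \in (A :|: B) :&: sa j.
Proof.
rewrite !inE andbC; split=> [[-> /(sat_or fa sa (FA 1) (FB 1))/orP//]|/andP[xj /orP AB_x]].
by split; [exact: xj | exact/(sat_or fa sa (FA 1) (FB 1))].
Qed.

Lemma sat_even_trace fa sa j : j != 1 ->
  sat fa sa (FEvenTrace j) <-> ~~ odd #|(A :|: B) :&: sa j|.
Proof.
move=> j_ne1; pose trace := (A :|: B) :&: sa j.
have sa1j Z : upd sa 1 Z j = sa j by rewrite /upd (negbTE j_ne1).
have traceP Z :
    sat fa (upd sa 1 Z) (FAllF 1 (FIff (FIn 1 1) (FInTrace j))) <-> Z = trace.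
  rewrite sat_allF; split=> [memZ|-> t]; last by rewrite sat_iff sat_in_trace sa1j.
  apply/setP=> t; move: (memZ t); rewrite sat_iff sat_in_trace sa1j => eqZ.
  by apply/idP/idP => /eqZ.
split=> [[Z [/traceP-> //]]|even_trace].
by exists trace; split; first exact/traceP.
Qed.

Lemma sat_odd_below fa sa : sat fa sa FOddBelow <->
  forall Y, Y \in SS -> fa 0 \in Y -> Y \proper sa 0 -> odd #|(A :|: B) :&: Y|.
Proof.
have oddP Y : sat fa (upd sa 2 Y)
    (FImp (FAnd (FSet 2) (FAnd (FIn 0 2) (FProper 2 0))) (FNot (FEvenTrace 2))) <->
    (Y \in SS -> fa 0 \in Y -> Y \proper sa 0 -> odd #|(A :|: B) :&: Y|).
  have evenY := sat_even_trace fa (upd sa 2 Y) (j := 2) isT.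
  have ltY := sat_proper fa (upd sa 2 Y) 2 0.
  rewrite sat_imp; split=> [oddY SSY x0Y /ltY ltYX|oddY [SSY [x0Y /ltY ltYX]] /evenY].
    by apply/negPn/negP => /evenY; apply: oddY.
  by rewrite oddY.
by rewrite sat_allS; split=> oddX Y; apply/oddP/oddX.
Qed.

Lemma sat_repr_AB fa sa : sat fa sa repr_AB <->
  [/\ sa 0 \in SS, fa 0 \in A, fa 0 \in sa 0, ~~ odd #|(A :|: B) :&: sa 0| &
      forall Y, Y \in SS -> fa 0 \in Y -> Y \proper sa 0 -> odd #|(A :|: B) :&: Y|].
Proof.
have evenP := sat_even_trace fa sa (j := 0) isT.
split=> [[SSX [x0A [x0X [/evenP evenX /(sat_odd_below fa sa) oddY]]]]|].
  by split.
by case=> SSX x0A x0X /evenP evenX /(sat_odd_below fa sa) oddY.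
Qed.

End Semantics.

Theorem lemma3p11 :
  exists phi : cmso2,
    (forall n, fo_free phi n -> n = 0) /\ (forall n, so_free phi n -> n = 0) /\
    forall (T : finType) (SS : {set {set T}}) (A B : {set T}) (Sn : {set {set T}}),
      laminar_set_system SS ->
      bicolouring A B ->
      (forall s, s \in Sn -> is_inner SS s) ->
      bicol_identifies SS A B Sn ->
      forall (fa : nat -> T) (sa : nat -> {set T}),
        sat SS A B fa sa phi <->
        [/\ is_inner SS (sa 0), sa 0 \in Sn & A_representative SS A B Sn (sa 0) (fa 0)].
Proof.
exists repr_AB; split; first by case=> [|[|[|n]]].
split; first by case=> [|[|[|n]]].
move=> T SS A B Sn lamSS [disjAB _] Sn_inner [pi [sigma goodP]] fa sa.
rewrite sat_repr_AB; split.
  move/(representative_parityP lamSS disjAB goodP) => [Sn_X pi_X].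
  by split; [exact: Sn_inner | | exists pi, sigma].
case=> _ Sn_X [pi' [sigma' [goodP' pi'_X]]].
exact/(representative_parityP lamSS disjAB goodP').
Qed.
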